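(* Let $\tau:\mathcal{X}\to\mathcal{X}$ be a continuous map on a compact metric space $(\mathcal{X},d)$ having at least one fixed point. Then $\tau$ is mixing if and only if $\tau$ is an asymptotic deformation.
   Context: $\tau^n$ is the $n$-fold composition of $\tau$. $\tau$ is mixing if there is $x_*\in\mathcal{X}$ with $\lim_{n\to\infty}\tau^n(x)=x_*$ for all $x\in\mathcal{X}$. $\tau$ is an asymptotic deformation if for all $x,y\in\mathcal{X}$ the sequence $d(\tau^n(x),\tau^n(y))$ converges and $\lim_{n\to\infty}d(\tau^n(x),\tau^n(y))\neq d(x,y)$ whenever $x\neq y$. *)

(* compact metric space = metricType R with compact setT *)
From HB Require Import structures.
From mathcomp Require Import all_boot all_order all_algebra.
From mathcomp Require Import all_classical all_reals all_analysis.
Set Implicit Arguments. Unset Strict Implicit. Unset Printing Implicit Defensive.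
Import Order.TTheory GRing.Theory Num.Theory numFieldTopology.Exports numFieldNormedType.Exports.
Local Open Scope classical_set_scope.
Local Open Scope ring_scope.

Definition mixing (R : realType) (X : metricType R) (tau : X -> X) : Prop :=
  exists xs : X, forall x : X, (fun n : nat => iter n tau x) @ \oo --> xs.

Definition asymptotic_deformation (R : realType) (X : metricType R)
    (tau : X -> X) : Prop :=
  forall x y : X,
    cvgn (fun n : nat => (mdist (iter n tau x) (iter n tau y) : R)) /\
    (x <> y -> limn (fun n : nat => (mdist (iter n tau x) (iter n tau y) : R)) <> mdist x y).

From HB Require Import structures.
From mathcomp Require Import all_boot all_order all_algebra.
From mathcomp Require Import all_classical all_reals all_analysis.
From mathcomp Require Import lra.
Local Open Scope classical_set_scope.
Local Open Scope ring_scope.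
Import Order.TTheory GRing.Theory Num.Theory numFieldTopology.Exports numFieldNormedType.Exports.

(* Mixing makes any two orbits converge to the same point, so their distance
   tends to 0, which differs from d(x, y) > 0.  Conversely, let x0 be a fixed
   point and L the limit of d(tau^n x, x0).  By compactness the orbit of x has
   a cluster point a, and continuity of tau^m gives d(tau^m a, x0) = L for
   every m: the distance between the orbits of a and x0 never changes.  The
   asymptotic deformation hypothesis then forces a = x0, hence L = 0 and
   tau^n x --> x0. *)

Section MetricLemmas.
Context {R : realType} {X : metricType R}.

Lemma continuous_mdistl (y : X) : continuous (fun z : X => mdist z y : R).
Proof.
move=> z; apply/cvgrPdist_lt => e e0.
have /metricType_numDomainType.fcvgrPdist_lt/(_ e e0) z_near : nbhs z --> z
  by exact: cvg_refl.
near=> t.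
have zt : mdist z t < e by near: t; exact: z_near.
have := metric_triangle z t y; have := metric_triangle t z y.
rewrite [mdist t z]metric_sym ltr_distl => ? ?; apply/andP; split; lra.
Unshelve. all: by end_near.
Qed.

Lemma cvg_mdist0 {T} {F : set_system T} {FF : Filter F} {u v : T -> X} {a : X} :
  u @ F --> a -> v @ F --> a -> (fun t => mdist (u t) (v t) : R) @ F --> 0.
Proof.
move=> ua va; apply/cvgrPdist_lt => e e0.
have e20 : 0 < e / 2 by rewrite divr_gt0.
have u_near := metricType_numDomainType.cvgr_dist_lt ua e20.
have v_near := metricType_numDomainType.cvgr_dist_lt va e20.
near=> t.
have au : mdist a (u t) < e / 2 by near: t; exact: u_near.
have av : mdist a (v t) < e / 2 by near: t; exact: v_near.
have := metric_triangle (u t) a (v t); have := mdist_ge0 (u t) (v t).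
rewrite [mdist (u t) a]metric_sym sub0r normrN => ? ?; rewrite ger0_norm //; lra.
Unshelve. all: by end_near.
Qed.

Lemma mdist_cvg0 {T} {F : set_system T} {FF : Filter F} {u : T -> X} {a : X} :
  (fun t => mdist (u t) a : R) @ F --> 0 -> u @ F --> a.
Proof.
move=> /cvgrPdist_lt ua; apply/metricType_numDomainType.cvgrPdist_lt => e e0.
apply: filterS (ua e e0) => t.
by rewrite sub0r normrN ger0_norm ?mdist_ge0 // metric_sym.
Qed.

End MetricLemmas.

Lemma cluster_cvg_eq {T U : topologicalType} {F : set_system T} {FF : Filter F}
    {g : T -> U} {a : T} {l : U} :
  hausdorff_space U -> {for a, continuous g} ->
  cluster F a -> g @ F --> l -> g a = l.
Proof.
move=> hU ga Fa gl; apply/esym/hU.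
apply: (cvg_cluster gl) => A B gA Bga.
have [w [Aw Bw]] := Fa _ _ gA (ga _ Bga).
by exists (g w).
Qed.

Lemma continuous_iter {T : topologicalType} {tau : T -> T} (m : nat) :
  continuous tau -> continuous (iter m tau).
Proof.
move=> ct; elim: m => [|m IH] z /=; first exact: cvg_id.
exact: continuous_comp (IH z) (ct _).
Qed.

Section AsymptoticDeformation.
Context {R : realType} {X : metricType R}.
Variable tau : X -> X.

Local Notation dist_iter x y := (fun n : nat => mdist (iter n tau x) (iter n tau y) : R).

Lemma mixing_asymptotic_deformation : mixing tau -> asymptotic_deformation tau.
Proof.
move=> [xs to_xs] x y.
have d0 : dist_iter x y @ \oo --> 0 by exact: cvg_mdist0 (to_xs x) (to_xs y).
split; first exact: cvgP d0.
by move=> xy; rewrite (cvg_lim (@Rhausdorff R) d0) => /esym/mdist_positivity.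
Qed.

Hypothesis tau_cont : continuous tau.

Lemma cluster_orbit_mdist_iter {x x0 a : X} {L : R} :
  (fun n => mdist (iter n tau x) x0 : R) @ \oo --> L ->
  cluster ((fun n => iter n tau x) @ \oo) a ->
  forall m, mdist (iter m tau a) x0 = L.
Proof.
move=> toL clu m.
pose g z := mdist (iter m tau z) x0 : R.
apply: (cluster_cvg_eq (g := g) (@Rhausdorff R) _ clu).
  exact: (continuous_comp (continuous_iter m tau_cont a) (continuous_mdistl x0 _)).
have shifted : (fun n => mdist (iter (n + m) tau x) x0 : R) =
    g \o (fun n => iter n tau x).
  by apply/funext => n; rewrite /g /= addnC iterD.
by rewrite -(cvg_shiftn m) /= shifted in toL.
Qed.

Variable x0 : X.
Hypotheses (tau_x0 : tau x0 = x0) (tau_AD : asymptotic_deformation tau).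

Lemma cvgn_mdist_iter_fixed (x : X) : cvgn (fun n => mdist (iter n tau x) x0 : R).
Proof.
have -> : (fun n => mdist (iter n tau x) x0 : R) = dist_iter x x0.
  by apply/funext => n; rewrite (iter_fix _ tau_x0).
exact: (tau_AD x x0).1.
Qed.

Lemma cluster_orbit_fixed {x a : X} :
  cluster ((fun n => iter n tau x) @ \oo) a -> a = x0.
Proof.
move=> clu; apply: contrapT => ax0; have [_ /(_ ax0)] := tau_AD a x0; apply.
have const_L := cluster_orbit_mdist_iter (cvgn_mdist_iter_fixed x) clu.
have -> : dist_iter a x0 = fun=> mdist a x0.
  by apply/funext => n; rewrite (iter_fix _ tau_x0) const_L -(const_L 0).
exact: (cvg_lim (@Rhausdorff R) (cvg_cst _)).
Qed.

Lemma asymptotic_deformation_mixing : compact [set: X] -> mixing tau.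
Proof.
move=> cX; exists x0 => x.
have [a [_ clu]] := cX ((fun n => iter n tau x) @ \oo) _ filterT.
have toL := cvgn_mdist_iter_fixed x.
have := cluster_orbit_mdist_iter toL clu 0.
rewrite /= (cluster_orbit_fixed clu) mdistxx => L0.
apply: mdist_cvg0; rewrite [X in _ --> X]L0; exact: toL.
Qed.

End AsymptoticDeformation.

Theorem mainTheorem9 (R : realType) (X : metricType R) (tau : X -> X) :
  compact [set: X] -> continuous tau -> (exists x0 : X, tau x0 = x0) ->
  (mixing tau <-> asymptotic_deformation tau).
Proof.
move=> cX ct [x0 tau_x0]; split; first exact: mixing_asymptotic_deformation.
move=> AD; exact: asymptotic_deformation_mixing tau_x0 AD cX.
Qed.
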